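(* The points $P=(\theta,1)$ and $Q=(\theta,0)$ are saddle fixed points of $F$ of indices $u$ and $u+1$, respectively, that are related by a heterodimensional cycle, i.e. $W^s(P,F)\cap W^u(Q,F)\neq\emptyset$ and $W^u(P,F)\cap W^s(Q,F)\neq\emptyset$.
   Context: Let $f_0,f_1\colon[0,1]\to[0,1]$ be $C^1$ injective maps such that: (F0.i) $f_0$ is increasing and has exactly two fixed points $0$ and $1$, both hyperbolic, with $f_0'(0)=\beta>1$, $f_0'(1)=\lambda\in(0,1)$ and $\lambda\le f_0'(x)\le\beta$ for all $x\in[0,1]$; (F0.ii) there are intervals $I_0=[a_0,b_0]\subset(0,1)$ with $b_0=f_0(a_0)$ and $I_1=[a_1,b_1]$ with $b_1=f_0(a_1)$, and numbers $\alpha>1$, $N\ge1$, with $f_0^N(I_0)=I_1$ and $\lambda\,(f_0^N)'(x)>\alpha$ for all $x\in I_0$; moreover $f_0$ is expanding on $[0,b_0]$ and contracting on $[a_1,1]$; (F1.i) $f_1$ is decreasing with $\gamma'=\min_{[0,1]}|f_1'|\le\gamma=\max_{[0,1]}|f_1'|<1$; (F1.ii) $|f_1'(x)|\ge\bar\alpha>1/\alpha$ for all $x\in[f_1^2(a_1),a_1]$; (F01) $f_1(1)=0$, $f_1([a_1,1])\subset[0,a_0)$, and $[0,f_0^{-2}(b_0))\subset f_1([0,1])$. Setting: $s,u\ge1$ integers, $\widehat{\mathbf C}=[0,1]^{s+u}$, $\Sigma_2=\{0,1\}^{\mathbb Z}$ with shift $\sigma$; $\Phi$ is a diffeomorphism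 of $\mathbb R^{s+u}$ with a horseshoe $\Gamma\subset\widehat{\mathbf C}$ with $s$-dimensional stable and $u$-dimensional unstable bundles, conjugate to $\sigma$ via $\varpi\colon\Gamma\to\Sigma_2$; sub-cubes $\widehat{\mathbf C}_0,\widehat{\mathbf C}_1$ are mapped affinely and in a Markovian way by $\Phi$ into $\widehat{\mathbf C}$, $\widehat{\mathbf C}_i$ containing the points $X\in\Gamma$ with $(\varpi(X))_0=i$; $\theta=\varpi^{-1}(0^{\mathbb Z})=0^{s+u}$, $W^s_{\rm loc}(\theta,\Phi)=[0,1]^s\times\{0^u\}$, $W^u_{\rm loc}(\theta,\Phi)=\{0^s\}\times[0,1]^u$. $\mathbf C=\widehat{\mathbf C}\times[0,1]$, $F(\widehat x,x)=(\Phi(\widehat x),f_i(x))$ if $\widehat x\in\widehat{\mathbf C}_i$. The expansion of $\Phi$ along its unstable direction is stronger than $\beta$ and its contraction along its stable direction is stronger than $\min\{\lambda,\gamma'\}$, so the splitting $E^{ss}\oplus E^c\oplus E^{uu}$ is dominated. The index of a saddle is the dimension of its unstable direction; $W^s(\cdot,F)$, $W^u(\cdot,F)$ denote stable and unstable manifolds of orbits. *)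

From HB Require Import structures.
From mathcomp Require Import all_boot all_order all_algebra.
From mathcomp Require Import all_classical all_reals all_analysis.
Set Implicit Arguments. Unset Strict Implicit. Unset Printing Implicit Defensive.
Import Order.TTheory GRing.Theory Num.Theory.
Import numFieldNormedType.Exports.
Local Open Scope classical_set_scope.
Local Open Scope ring_scope.

Section Defs.
Variable R : realType.

Definition Icc (a b : R) : set R := [set x | a <= x <= b].

Definition cube n : set 'rV[R]_n := [set v | forall j, 0 <= v ord0 j <= 1].
Arguments cube n : clear implicits.

Definition box {n} (a b : 'I_n -> R) : set 'rV[R]_n :=
  [set v | forall j, a j <= v ord0 j <= b j].

(* Linear algebra of tangent maps (row-vector convention: v |-> v *m A) *)

Definition jac n (f : 'rV[R]_n -> 'rV[R]_n) (x : 'rV[R]_n) : 'M[R]_n :=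
  lin1_mx ('d f x).

Definition mxpow n (A : 'M[R]_n) (m : nat) : 'M[R]_n :=
  iter m (fun M => M *m A) 1%:M.

(* tangent cocycle D f^m (x) = J x *m J (f x) *m ... *m J (f^(m-1) x) *)
Fixpoint cocycle n (J : 'rV[R]_n -> 'M[R]_n) (f : 'rV[R]_n -> 'rV[R]_n)
    (m : nat) (x : 'rV[R]_n) : 'M[R]_n :=
  match m with
  | 0 => 1%:M
  | m'.+1 => J x *m cocycle J f m' (f x)
  end.

Definition hyperbolic_mx n (A : 'M[R]_n) (k : nat) : Prop :=
  exists Es Eu : 'M[R]_n,
    (1%:M <= Es + Eu)%MS /\ mxdirect (Es + Eu) /\ \rank Eu = k /\
    (Es *m A <= Es)%MS /\ (Eu *m A <= Eu)%MS /\
    exists c mu : R, [/\ 0 < c, 0 < mu, mu < 1 &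
      forall (m : nat) (v : 'rV[R]_n),
        ((v <= Es)%MS -> `|v *m mxpow A m| <= c * mu ^+ m * `|v|) /\
        ((v <= Eu)%MS -> `|v| <= c * mu ^+ m * `|v *m mxpow A m|)].

(* saddle of index k (index = dimension of the unstable direction) for a
   fixed point whose tangent map is A *)
Definition saddle_mx n (A : 'M[R]_n) (k : nat) : Prop :=
  hyperbolic_mx A k /\ (0 < k < n)%N.

Definition hyperbolic_set n (f : 'rV[R]_n -> 'rV[R]_n)
    (J : 'rV[R]_n -> 'M[R]_n) (Gamma : set 'rV[R]_n) (ds du : nat)
    (ks ku : R) : Prop :=
  exists (Es Eu : 'rV[R]_n -> 'M[R]_n) (c : R), 0 < c /\
    forall x, Gamma x ->
      \rank (Es x) = ds /\ \rank (Eu x) = du /\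
      (1%:M <= Es x + Eu x)%MS /\
      (Es x *m J x == Es (f x))%MS /\ (Eu x *m J x == Eu (f x))%MS /\
      forall (m : nat) (v : 'rV[R]_n),
        ((v <= Es x)%MS -> `|v *m cocycle J f m x| <= c * ks ^+ m * `|v|) /\
        ((v <= Eu x)%MS -> c * ku ^+ m * `|v| <= `|v *m cocycle J f m x|).

Definition diffeo n (f : 'rV[R]_n -> 'rV[R]_n) : Prop :=
  exists g : 'rV[R]_n -> 'rV[R]_n,
    cancel f g /\ cancel g f /\
    (forall x, differentiable f x) /\ (forall x, differentiable g x) /\
    continuous (jac f) /\ continuous (jac g).

Definition Sigma2 := int -> bool.      (* {0,1}^Z, false = 0, true = 1 *)
Definition shift (w : Sigma2) : Sigma2 := fun k => w (k + 1)%R.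
Definition zero_seq : Sigma2 := fun _ => false.

(* pi : Gamma -> Sigma2 is a topological conjugacy between f|Gamma and the
   shift (product topology on Sigma2, written out coordinatewise). *)
Definition conjugacy n (f : 'rV[R]_n -> 'rV[R]_n) (Gamma : set 'rV[R]_n)
    (pi : 'rV[R]_n -> Sigma2) : Prop :=
  (forall x, Gamma x -> Gamma (f x)) /\
  (forall x, Gamma x -> pi (f x) = shift (pi x)) /\
  (forall x y, Gamma x -> Gamma y -> pi x = pi y -> x = y) /\
  (forall w, exists2 x, Gamma x & pi x = w) /\
  (* continuity of pi *)
  (forall x k, Gamma x -> exists2 e : R, 0 < e &
     forall y, Gamma y -> `|x - y| < e -> pi y k = pi x k) /\
  (* continuity of pi^-1 *)
  (forall x (e : R), Gamma x -> 0 < e -> exists K : nat,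
     forall y, Gamma y -> (forall k : int, `|k| <= K%:Z -> pi y k = pi x k) ->
       `|x - y| < e).

Definition Wsloc n (f : 'rV[R]_n -> 'rV[R]_n) (C0 : set 'rV[R]_n)
    (th : 'rV[R]_n) : set 'rV[R]_n :=
  [set x | (forall m, C0 (iter m f x)) /\ (fun m => iter m f x) @ \oo --> th].

Definition Wuloc n (f : 'rV[R]_n -> 'rV[R]_n) (C0 : set 'rV[R]_n)
    (th : 'rV[R]_n) : set 'rV[R]_n :=
  [set x | exists y : nat -> 'rV[R]_n,
     [/\ y 0%N = x, forall m, C0 (y m.+1) /\ f (y m.+1) = y m &
         y @ \oo --> th]].

Definition skewF n (Phi : 'rV[R]_n -> 'rV[R]_n) (C0 : set 'rV[R]_n)
    (f0 f1 : R -> R) (X : 'rV[R]_n * R) : 'rV[R]_n * R :=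
  (Phi X.1, if `[< C0 X.1 >] then f0 X.2 else f1 X.2).

Definition skew_dom n (C0 C1 : set 'rV[R]_n) : set ('rV[R]_n * R) :=
  [set X | (C0 X.1 \/ C1 X.1) /\ Icc 0 1 X.2].

Definition skew_jac n (Phi : 'rV[R]_n -> 'rV[R]_n) (C0 : set 'rV[R]_n)
    (f0 f1 : R -> R) (X : 'rV[R]_n * R) : 'M[R]_(n + 1) :=
  block_mx (jac Phi X.1) 0 0
    (if `[< C0 X.1 >] then derive1 f0 X.2 else derive1 f1 X.2)%:M.

Definition Ws (T : pseudoMetricType R) (F : T -> T) (D : set T) (P : T) : set T :=
  [set X | (forall m, D (iter m F X)) /\ (fun m => iter m F X) @ \oo --> P].

Definition Wu (T : pseudoMetricType R) (F : T -> T) (D : set T) (P : T) : set T :=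
  [set X | exists Y : nat -> T,
     [/\ Y 0%N = X, forall m, D (Y m.+1) /\ F (Y m.+1) = Y m & Y @ \oo --> P]].

(* C^1 map (f : [0,1] -> R given as the restriction of a C^1 map of R) *)
Definition C1_map (f : R -> R) : Prop :=
  (forall x, derivable f x 1) /\ continuous (derive1 f).

Definition maps01_inj (f : R -> R) : Prop :=
  (forall x, Icc 0 1 x -> Icc 0 1 (f x)) /\
  (forall x y, Icc 0 1 x -> Icc 0 1 y -> f x = f y -> x = y).

Definition F0i (f0 : R -> R) (beta lambda : R) : Prop :=
  (forall x y, Icc 0 1 x -> Icc 0 1 y -> x < y -> f0 x < f0 y) /\
  (forall x, Icc 0 1 x -> (f0 x = x <-> x = 0 \/ x = 1)) /\
  derive1 f0 0 = beta /\ 1 < beta /\ derive1 f0 1 = lambda /\ 0 < lambda /\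
  lambda < 1 /\
  (forall x, Icc 0 1 x -> lambda <= derive1 f0 x <= beta).

Definition F0ii (f0 : R -> R) (lambda a0 b0 a1 b1 alpha : R) (N : nat) : Prop :=
  0 < a0 /\ b0 < 1 /\ b0 = f0 a0 /\ b1 = f0 a1 /\ 1 < alpha /\ (1 <= N)%N /\
  iter N f0 @` Icc a0 b0 = Icc a1 b1 /\
  (forall x, Icc a0 b0 x -> alpha < lambda * derive1 (iter N f0) x) /\
  (forall x, Icc 0 b0 x -> 1 < derive1 f0 x) /\
  (forall x, Icc a1 1 x -> derive1 f0 x < 1).

Definition F1i (f1 : R -> R) (gamma' gamma : R) : Prop :=
  [/\ forall x y, Icc 0 1 x -> Icc 0 1 y -> x < y -> f1 y < f1 x,
      forall x, Icc 0 1 x -> gamma' <= `|derive1 f1 x| <= gamma,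
      exists2 x, Icc 0 1 x & `|derive1 f1 x| = gamma',
      exists2 x, Icc 0 1 x & `|derive1 f1 x| = gamma &
      gamma < 1].

Definition F1ii (f1 : R -> R) (a1 alpha alphabar : R) : Prop :=
  1 / alpha < alphabar /\
  forall x, Icc (f1 (f1 a1)) a1 x -> alphabar <= `|derive1 f1 x|.

(* (F01) ; f0^{-2}(b0) is the c in [0,1] with f0 (f0 c) = b0 *)
Definition F01 (f0 f1 : R -> R) (a0 b0 a1 : R) : Prop :=
  [/\ f1 1 = 0,
      forall x, Icc a1 1 x -> 0 <= f1 x < a0 &
      forall c, Icc 0 1 c -> f0 (f0 c) = b0 ->
        forall y, 0 <= y < c -> exists2 x, Icc 0 1 x & f1 x = y].

(* C is a sub-box of the cube [0,1]^(s+u) spanning the whole stable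
   directions (first s coordinates), mapped affinely by Phi onto a sub-box
   of the cube spanning the whole unstable directions (last u coordinates):
   a Markov rectangle of the horseshoe. *)
Definition markov_affine_subcube (s u : nat)
    (Phi : 'rV[R]_(s + u) -> 'rV[R]_(s + u)) (C : set 'rV[R]_(s + u)) : Prop :=
  [/\ exists a b : 'I_(s + u) -> R,
        [/\ C = box a b, box a b `<=` cube (s + u)%N &
            forall j : 'I_s, a (lshift u j) = 0 /\ b (lshift u j) = 1],
      exists c d : 'I_(s + u) -> R,
        [/\ Phi @` C = box c d, box c d `<=` cube (s + u)%N &
            forall j : 'I_u, c (rshift s j) = 0 /\ d (rshift s j) = 1] &
      exists (M : 'M[R]_(s + u)) (b : 'rV[R]_(s + u)),
        forall x, C x -> Phi x = x *m M + b].

(* the standing setting: Phi is a diffeomorphism of R^(s+u) with a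
   horseshoe Gamma in the cube (s + u)%N, conjugate to the shift via pi, with
   s-dimensional stable and u-dimensional unstable bundles (rates ks, ku),
   Markov affine sub-cubes C0, C1, theta = pi^-1(0^Z) = 0 and the given
   local invariant manifolds of theta. *)
Definition horseshoe_setting (s u : nat)
    (Phi : 'rV[R]_(s + u) -> 'rV[R]_(s + u)) (Gamma : set 'rV[R]_(s + u))
    (pi : 'rV[R]_(s + u) -> Sigma2) (C0 C1 : set 'rV[R]_(s + u))
    (ks ku : R) : Prop :=
  diffeo Phi /\
  Gamma `<=` cube (s + u)%N /\
  conjugacy Phi Gamma pi /\
  hyperbolic_set Phi (jac Phi) Gamma s u ks ku /\
  markov_affine_subcube Phi C0 /\ markov_affine_subcube Phi C1 /\
  C0 `&` C1 = set0 /\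
  (forall x, Gamma x -> pi x 0 = false -> C0 x) /\
  (forall x, Gamma x -> pi x 0 = true -> C1 x) /\
  Gamma 0 /\ pi 0 = zero_seq /\
  Wsloc Phi C0 0 = [set v | cube (s + u)%N v /\ rsubmx v = 0] /\
  Wuloc Phi C0 0 = [set v | cube (s + u)%N v /\ lsubmx v = 0].

End Defs.
Arguments cube {R} n.

From Pilot Require Import Defs.
From HB Require Import structures.
From mathcomp Require Import all_boot all_order all_algebra.
From mathcomp Require Import all_classical all_reals all_analysis.
Import Order.TTheory GRing.Theory Num.Theory.
Import numFieldNormedType.Exports.
Local Open Scope classical_set_scope.
Local Open Scope ring_scope.
Set Implicit Arguments. Unset Strict Implicit. Unset Printing Implicit Defensive.

(* The fibre {theta} x [0,1] is invariant and F acts on it by f0, so P and Q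
   are fixed and DF there is DPhi(theta) (+) f0'(1), resp. DPhi(theta) (+) f0'(0):
   the contracting direction lambda < 1 keeps the index u, the expanding
   direction beta > 1 raises it to u + 1.  As f0 has no fixed point in (0,1) and
   f0'(0) > 1, we have f0 x > x on (0,1), so each interior point of the fibre is
   forward asymptotic to P and backward asymptotic to Q.  The other connection
   uses the horseshoe points z_j whose itinerary is 1 exactly at time j: then
   Phi z_j = z_(j-1) and z_j -> theta as |j| -> oo, so (z_0, 1) has the backward
   orbit (z_j, 1) -> P, while f1(1) = 0 sends its forward orbit along
   (z_(-j), 0) -> Q. *)

Section BlockNorm.
Variable R : realType.

Lemma mx_norm_entry m n (v : 'M[R]_(m, n)) i j : `|v i j| <= `|v|.
Proof.
by rewrite [leRHS]/Num.Def.normr /= mx_normrE; exact: (le_bigmax _ _ (i, j)).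
Qed.

Lemma mx_norm_le m n (v : 'M[R]_(m, n)) (b : R) :
  0 <= b -> (forall i j, `|v i j| <= b) -> `|v| <= b.
Proof.
move=> b0 vb; rewrite [leLHS]/Num.Def.normr /= mx_normrE.
by apply: bigmax_le => // -[i j] _; exact: vb.
Qed.

Lemma norm_lsubmx_le n1 n2 (v : 'rV[R]_(n1 + n2)) : `|lsubmx v| <= `|v|.
Proof. by apply: mx_norm_le => // i j; rewrite mxE mx_norm_entry. Qed.

Lemma norm_rsubmx_le n1 n2 (v : 'rV[R]_(n1 + n2)) : `|rsubmx v| <= `|v|.
Proof. by apply: mx_norm_le => // i j; rewrite mxE mx_norm_entry. Qed.

Lemma norm_hsubmx_le n1 n2 (v : 'rV[R]_(n1 + n2)) :
  `|v| <= `|lsubmx v| + `|rsubmx v|.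
Proof.
apply: mx_norm_le => [|i j]; first exact: addr_ge0.
rewrite -[v]hsubmxK; case: (split_ordP j) => k ->.
  by rewrite row_mxEl row_mxKl ler_wpDr // mx_norm_entry.
by rewrite row_mxEr row_mxKr ler_wpDl // mx_norm_entry.
Qed.

End BlockNorm.

Section HyperbolicMatrix.
Variable R : realType.

Lemma mxpow_comm n (A : 'M[R]_n) m : A *m mxpow A m = mxpow A m *m A.
Proof.
elim: m => [|m IH]; rewrite /mxpow /= -?/(mxpow _ _) ?mulmx1 ?mul1mx //.
by rewrite mulmxA IH.
Qed.

Lemma cocycle_fixpoint n (J : 'rV[R]_n -> 'M[R]_n) f x m :
  f x = x -> cocycle J f m x = mxpow (J x) m.
Proof. by move=> fx; elim: m => [|m IH] //=; rewrite fx IH mxpow_comm. Qed.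

Lemma mxpow_diag_block n1 n2 (A : 'M[R]_n1) (B : 'M[R]_n2) m :
  mxpow (block_mx A 0 0 B) m = block_mx (mxpow A m) 0 0 (mxpow B m).
Proof.
elim: m => [|m IH] /=; first by rewrite -scalar_mx_block.
rewrite /mxpow /= -!/(mxpow _ _) IH mulmx_block.
by rewrite !mulmx0 !mul0mx !addr0 !add0r.
Qed.

Lemma mxpow_scalar n (l : R) m : mxpow (l%:M : 'M[R]_n) m = (l ^+ m)%:M.
Proof.
elim: m => [|m IH]; first by rewrite expr0.
by rewrite /mxpow /= -/(mxpow _ _) IH -scalar_mxM exprSr.
Qed.

Lemma lsubmx_mul_diag_block n1 n2 (A : 'M[R]_n1) (B : 'M[R]_n2)
    (v : 'rV_(n1 + n2)) :
  lsubmx (v *m block_mx A 0 0 B) = lsubmx v *m A.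
Proof.
by rewrite -{1}[v]hsubmxK mul_row_block !mulmx0 addr0 row_mxKl.
Qed.

Lemma rsubmx_mul_diag_block n1 n2 (A : 'M[R]_n1) (B : 'M[R]_n2)
    (v : 'rV_(n1 + n2)) :
  rsubmx (v *m block_mx A 0 0 B) = rsubmx v *m B.
Proof.
by rewrite -{1}[v]hsubmxK mul_row_block !mulmx0 add0r row_mxKr.
Qed.

Lemma submx_diag_blockP n1 n2 (E : 'M[R]_n1) (F : 'M[R]_n2)
    (v : 'rV_(n1 + n2)) :
  (v <= block_mx E 0 0 F)%MS -> (lsubmx v <= E)%MS /\ (rsubmx v <= F)%MS.
Proof.
case/submxP => w ->.
by rewrite lsubmx_mul_diag_block rsubmx_mul_diag_block !submxMl.
Qed.

Lemma diag_block_submx n1 n2 (X E : 'M[R]_n1) (Y F : 'M[R]_n2) :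
  (X <= E)%MS -> (Y <= F)%MS -> (block_mx X 0 0 Y <= block_mx E 0 0 F)%MS.
Proof.
case/submxP => D1 ->; case/submxP => D2 ->.
have -> : block_mx (D1 *m E) 0 0 (D2 *m F) =
          block_mx D1 0 0 D2 *m block_mx E 0 0 F.
  by rewrite mulmx_block !mulmx0 !mul0mx !addr0 !add0r.
exact: submxMl.
Qed.

Lemma diag_block_mul_submx n1 n2 (E A : 'M[R]_n1) (F B : 'M[R]_n2) :
  (E *m A <= E)%MS -> (F *m B <= F)%MS ->
  (block_mx E 0 0 F *m block_mx A 0 0 B <= block_mx E 0 0 F)%MS.
Proof.
move=> EA FB; rewrite mulmx_block !mulmx0 !mul0mx !addr0 !add0r.
exact: diag_block_submx.
Qed.

Lemma diag_block_addsmx_full n1 n2 (E1 F1 : 'M[R]_n1) (E2 F2 : 'M[R]_n2) :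
  (1%:M <= E1 + F1)%MS -> (1%:M <= E2 + F2)%MS ->
  (1%:M <= block_mx E1 0 0 E2 + block_mx F1 0 0 F2)%MS.
Proof.
case/sub_addsmxP => -[w1 w2] /= def1; case/sub_addsmxP => -[w3 w4] /= def2.
apply/sub_addsmxP; exists (block_mx w1 0 0 w3, block_mx w2 0 0 w4) => /=.
rewrite !mulmx_block !mulmx0 !mul0mx !addr0 !add0r add_block_mx.
by rewrite -def1 -def2 !addr0 -scalar_mx_block.
Qed.

Lemma ler_scaled_pow (c c' mu mu' a b : R) m :
  0 <= c <= c' -> 0 <= mu <= mu' -> 0 <= a <= b ->
  c * mu ^+ m * a <= c' * mu' ^+ m * b.
Proof.
move=> /andP[c0 cc'] /andP[mu0 mumu'] /andP[a0 ab].
have mum : mu ^+ m <= mu' ^+ m by rewrite lerXn2r // nnegrE (le_trans mu0).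
rewrite -!mulrA; apply: ler_pM; rewrite ?mulr_ge0 ?exprn_ge0 //.
by apply: ler_pM; rewrite ?exprn_ge0.
Qed.

Lemma hyperbolic_mx_diag_block n1 n2 (A : 'M[R]_n1) (B : 'M[R]_n2) k1 k2 :
  hyperbolic_mx A k1 -> hyperbolic_mx B k2 ->
  hyperbolic_mx (block_mx A 0 0 B) (k1 + k2).
Proof.
move=> [Es1 [Eu1 [span1 [dir1 [rk1 [sA [uA [c1 [mu1 [c10 mu10 mu11 b1]]]]]]]]]].
move=> [Es2 [Eu2 [span2 [dir2 [rk2 [sB [uB [c2 [mu2 [c20 mu20 mu21 b2]]]]]]]]]].
have span := diag_block_addsmx_full span1 span2.
exists (block_mx Es1 0 0 Es2), (block_mx Eu1 0 0 Eu2); split=> //; split.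
  move: dir1 dir2; rewrite !mxdirectEgeq /= !rank_diag_block_mx => d1 d2.
  apply: leq_trans (mxrankS span); rewrite mxrank1 addnACA.
  by apply: leq_add; [exact: leq_trans d1 (rank_leq_col _) |
                      exact: leq_trans d2 (rank_leq_col _)].
split; first by rewrite rank_diag_block_mx rk1 rk2.
split; first exact: diag_block_mul_submx.
split; first exact: diag_block_mul_submx.
set mu := Num.max mu1 mu2.
have le_mu1 : 0 <= mu1 <= mu by rewrite (ltW mu10) le_max lexx.
have le_mu2 : 0 <= mu2 <= mu by rewrite (ltW mu20) le_max lexx orbT.
have le_c1 : 0 <= c1 <= c1 by rewrite (ltW c10) lexx.
have le_c2 : 0 <= c2 <= c2 by rewrite (ltW c20) lexx.
exists (c1 + c2), mu; split => [||| m v]; first exact: addr_gt0.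
- by rewrite lt_max mu10.
- by rewrite gt_max mu11.
set w := v *m _; rewrite !mulrDl.
have lw : lsubmx w = lsubmx v *m mxpow A m.
  by rewrite /w mxpow_diag_block lsubmx_mul_diag_block.
have rw : rsubmx w = rsubmx v *m mxpow B m.
  by rewrite /w mxpow_diag_block rsubmx_mul_diag_block.
split => /submx_diag_blockP[vl vr]; apply: le_trans (norm_hsubmx_le _) _;
  rewrite ?lw ?rw; apply: lerD.
- apply: le_trans (proj1 (b1 m _) vl) _.
  by apply: ler_scaled_pow; rewrite // normr_ge0 norm_lsubmx_le.
- apply: le_trans (proj1 (b2 m _) vr) _.
  by apply: ler_scaled_pow; rewrite // normr_ge0 norm_rsubmx_le.
- apply: le_trans (proj2 (b1 m _) vl) _.
  by apply: ler_scaled_pow; rewrite // normr_ge0 -lw norm_lsubmx_le.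
- apply: le_trans (proj2 (b2 m _) vr) _.
  by apply: ler_scaled_pow; rewrite // normr_ge0 -rw norm_rsubmx_le.
Qed.

Lemma hyperbolic_mx_scalar_contracting n (l : R) :
  0 < l < 1 -> hyperbolic_mx (l%:M : 'M[R]_n) 0.
Proof.
move=> /andP[l0 l1]; exists 1%:M, 0.
have span : (1%:M <= 1%:M + (0 : 'M[R]_n))%MS by rewrite addsmx0.
split=> //; split; first by rewrite mxdirectEgeq /= mxrank0 addn0 addsmx0.
split; first exact: mxrank0.
split; first exact: submx1.
split; first by rewrite mul0mx.
exists 1, l; split => // m v; rewrite mxpow_scalar mul_mx_scalar normrZ mul1r.
split => [_|]; first by rewrite ger0_norm // exprn_ge0 // ltW.
by rewrite submx0 => /eqP ->; rewrite !normr0 !mulr0.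
Qed.

Lemma hyperbolic_mx_scalar_expanding n (l : R) :
  1 < l -> hyperbolic_mx (l%:M : 'M[R]_n) n.
Proof.
move=> l1; have l0 : 0 < l := lt_trans ltr01 l1.
exists 0, 1%:M.
have span : (1%:M <= (0 : 'M[R]_n) + 1%:M)%MS by rewrite adds0mx.
split=> //; split; first by rewrite mxdirectEgeq /= mxrank0 add0n adds0mx.
split; first exact: mxrank1.
split; first by rewrite mul0mx.
split; first exact: submx1.
exists 1, l^-1; split; rewrite ?invr_gt0 ?invf_lt1 // => m v.
have lm0 : 0 <= l ^+ m by rewrite exprn_ge0 // ltW.
rewrite mxpow_scalar mul_mx_scalar normrZ mul1r ger0_norm //.
split; first by rewrite submx0 => /eqP ->; rewrite !normr0 !mulr0.
by rewrite mulrA exprVn mulVf ?mul1r // expf_neq0 // gt_eqF.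
Qed.

Lemma hyperbolic_set_fixpoint n (f : 'rV[R]_n -> 'rV[R]_n) J Gamma ds du
    (ks ku : R) x :
  hyperbolic_set f J Gamma ds du ks ku -> (ds + du)%N = n ->
  0 < ks < 1 -> 1 < ku -> Gamma x -> f x = x -> hyperbolic_mx (J x) du.
Proof.
move=> [Es [Eu [c [c0 hypG]]]] dim /andP[ks0 ks1] ku1 Gx fx.
have [rks [rku [span [sJ [uJ bnd]]]]] := hypG x Gx; rewrite fx in sJ uJ.
exists (Es x), (Eu x); split=> //; split.
  by rewrite mxdirectEgeq /= rks rku dim -{1}(mxrank1 R n) mxrankS.
split=> //; split; first by case/andP: sJ.
split; first by case/andP: uJ.
have ku0 : 0 < ku := lt_trans ltr01 ku1.
have le_c : 0 <= c <= c + c^-1 by rewrite ltW // lerDl invr_ge0 ltW.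
have le_cV : 0 <= c^-1 <= c + c^-1 by rewrite invr_ge0 ltW // lerDr ltW.
set mu := Num.max ks ku^-1.
have le_ks : 0 <= ks <= mu by rewrite ltW // le_max lexx.
have le_kuV : 0 <= ku^-1 <= mu by rewrite invr_ge0 ltW // le_max lexx orbT.
exists (c + c^-1), mu; split => [|||m v].
- by rewrite addr_gt0 ?invr_gt0.
- by rewrite lt_max ks0.
- by rewrite gt_max ks1 invf_lt1.
rewrite -(cocycle_fixpoint J m fx); have [bs bu] := bnd m v; split => [vs|vu].
  apply: le_trans (bs vs) _.
  by apply: ler_scaled_pow; rewrite // normr_ge0 lexx.
have exp_v : `|v| <= c^-1 * ku^-1 ^+ m * `|v *m cocycle J f m x|.
  by rewrite exprVn -invfM ler_pdivlMl ?mulr_gt0 ?exprn_gt0 // bu.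
apply: le_trans exp_v _.
by apply: ler_scaled_pow; rewrite // normr_ge0 lexx.
Qed.

End HyperbolicMatrix.

Lemma exists_backward_orbit (T : Type) (f : T -> T) (A : set T) x :
  (forall y, A y -> exists2 t, A t & f t = y) -> A x ->
  exists v : nat -> T, v 0%N = x /\ forall m, A (v m) /\ f (v m.+1) = v m.
Proof.
move=> preimA Ax.
have /choice[g gP] : forall y, exists t, A y -> A t /\ f t = y.
  move=> y; have [/preimA[t At ft]|nAy] := pselect (A y); last by exists y.
  by exists t.
have Ag m : A (iter m g x) by elim: m => //= m /gP[].
exists (fun m => iter m g x); split=> // m.
by split=> //=; have [] := gP _ (Ag m).
Qed.

Section IntervalDynamics.
Variable R : realType.
Implicit Types (f : R -> R) (u : R ^nat).

Lemma exists_gt_self_near0 f :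
  derivable f 0 1 -> 1 < derive1 f 0 -> f 0 = 0 ->
  exists2 h, 0 < h < 1 & h < f h.
Proof.
move=> df df1 f00.
have quot : (fun h : R => h^-1 *: ((f \o shift 0) (h *: 1) - f 0)) @ 0^' -->
    derive1 f 0 by rewrite derive1E; exact: df.
have [e /= e0 He] := cvgr_gt _ quot _ df1.
set h := Num.min (e / 2) (1 / 2).
have h0 : 0 < h by rewrite lt_min !divr_gt0.
have h1 : h < 1.
  by rewrite gt_min [1 / 2 < _]ltr_pdivrMr // mul1r ltr1n orbT.
have he : h < e by rewrite gt_min ltr_pdivrMr // ltr_pMr // ltr1n.
have := He h; rewrite /ball /= sub0r normrN gtr0_norm //.
move=> /(_ he (lt0r_neq0 h0)).
rewrite /= f00 subr0 addr0 /GRing.scale /= mulr1 ltr_pdivlMl // mulr1 => hfh.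
by exists h; rewrite ?h0.
Qed.

Lemma gt_self_of_no_fixpoint f : continuous f ->
  (forall x, 0 < x < 1 -> f x != x) -> (exists2 h, 0 < h < 1 & h < f h) ->
  forall x, 0 < x < 1 -> x < f x.
Proof.
move=> fc nofix [h /andP[h0 h1] hfh] x /andP[x0 x1].
rewrite ltNge; apply/negP => fxx.
pose g t := f t - t.
have gc : continuous g by move=> t; apply: cvgB; [exact: fc | exact: cvg_id].
have no_root a b : 0 < a -> b < 1 -> a <= b ->
    Num.min (g a) (g b) <= 0 <= Num.max (g a) (g b) -> False.
  move=> a0 b1 ab /(IVT ab (continuous_subspaceT gc))[c].
  rewrite in_itv /= => /andP[ac cb] /eqP; rewrite subr_eq0 => /eqP fc0.
  have c01 : 0 < c < 1 by rewrite (lt_le_trans a0 ac) (le_lt_trans cb b1).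
  by move: (nofix c c01); rewrite fc0 eqxx.
have gh : 0 < g h by rewrite subr_gt0.
have gx : g x <= 0 by rewrite subr_le0.
have sign_change : Num.min (g h) (g x) <= 0 <= Num.max (g h) (g x).
  by rewrite ge_min le_max gx (ltW gh) !orbT.
case: (leP h x) => [hx|xh]; first exact: (no_root h x).
by apply: (no_root x h) => //; [exact: ltW | rewrite minC maxC].
Qed.

Lemma cvg_fixpoint f u (L : R) : continuous f ->
  u @ \oo --> L -> (fun m => f (u m)) @ \oo --> L -> f L = L.
Proof.
move=> fc uL fuL; apply: (cvg_unique _ _ fuL) => //=.
by apply: continuous_cvg => //; exact: fc.
Qed.

Lemma iter_mem01 f : (forall x, 0 < x < 1 -> x < f x < 1) ->
  forall x m, 0 < x < 1 -> 0 < iter m f x < 1.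
Proof.
move=> f01 x m x01; elim: m => //= m /[dup] /andP[y0 _] /f01 /andP[yf fy1].
by rewrite fy1 (lt_trans y0 yf).
Qed.

Lemma iter_cvg1 f : continuous f -> (forall x, 0 < x < 1 -> x < f x < 1) ->
  forall x, 0 < x < 1 -> (fun m => iter m f x) @ \oo --> (1 : R).
Proof.
move=> fc f01 x x01; set u := fun m => iter m f x.
have u01 m : 0 < u m < 1 by exact: iter_mem01.
have und : nondecreasing_seq u.
  apply/nondecreasing_seqP => m; rewrite /u iterS.
  by case/andP: (f01 _ (u01 m)) => /ltW.
have ucv : cvgn u.
  apply: nondecreasing_is_cvgn => //; exists 1 => _ [m _ <-].
  by case/andP: (u01 m) => _ /ltW.
have fL : f (limn u) = limn u.
  by apply: (cvg_fixpoint fc ucv); have := ucv; rewrite -cvg_shiftS.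
have L1 : limn u <= 1.
  by apply: limr_le ucv _; near=> m; case/andP: (u01 m) => _ /ltW.
have L0 : 0 < limn u.
  case/andP: (u01 0%N) => u00 _.
  exact: lt_le_trans u00 (nondecreasing_cvgn_le und ucv 0).
suff <- : limn u = 1 by [].
apply/eqP; rewrite eq_le L1 leNgt; apply/negP => L1'.
have L01 : 0 < limn u < 1 by rewrite L0.
by have := f01 _ L01; rewrite fL ltxx.
Unshelve. all: by end_near. Qed.

Lemma backward_orbit_cvg0 f u : continuous f ->
  (forall x, 0 < x < 1 -> x < f x) ->
  (forall m, 0 < u m < 1) -> (forall m, f (u m.+1) = u m) ->
  u @ \oo --> (0 : R).
Proof.
move=> fc f01 u01 fu.
have uni : nonincreasing_seq u.
  by apply/nonincreasing_seqP => m; rewrite -[leRHS]fu; exact/ltW/f01.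
have ucv : cvgn u.
  apply: nonincreasing_is_cvgn => //; exists 0 => _ [m _ <-].
  by case/andP: (u01 m) => /ltW.
have fL : f (limn u) = limn u.
  apply: (cvg_fixpoint fc ucv); rewrite -cvg_shiftS.
  by under [X in X @ _]eq_fun do rewrite fu.
have L0 : 0 <= limn u.
  by apply: limr_ge ucv _; near=> m; case/andP: (u01 m) => /ltW.
have L1 : limn u < 1.
  by apply: le_lt_trans (nonincreasing_cvgn_ge uni ucv 0) _; case/andP: (u01 0%N).
suff <- : limn u = 0 by [].
apply/eqP; rewrite eq_le L0 andbT leNgt; apply/negP => L0'.
have L01 : 0 < limn u < 1 by rewrite L0'.
by have := f01 _ L01; rewrite fL ltxx.
Unshelve. all: by end_near. Qed.

Lemma exists_preimage01 f : continuous f -> f 0 = 0 -> f 1 = 1 ->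
  forall y, 0 < y < 1 -> exists2 t, 0 < t < 1 & f t = y.
Proof.
move=> fc f00 f11 y /andP[y0 y1].
have [t] : exists2 t, t \in `[0, 1] & f t = y.
  apply: IVT; [exact: ler01 | exact: continuous_subspaceT |].
  by rewrite f00 f11 ge_min le_max (ltW y0) (ltW y1) orbT.
rewrite in_itv /= => /andP[t0 t1] fty; exists t => //.
rewrite !lt_neqAle t0 t1 !andbT; apply/andP; split; apply/eqP => te.
  by move: y0; rewrite -fty -te f00 ltxx.
by move: y1; rewrite -fty te f11 ltxx.
Qed.

Lemma F0i_dynamics f0 (beta lambda : R) : C1_map f0 -> F0i f0 beta lambda ->
  [/\ continuous f0, f0 0 = 0, f0 1 = 1 &
      forall x, 0 < x < 1 -> x < f0 x < 1].
Proof.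
move=> [df0 _] [f0incr [f0fix [df0_0 [beta1 _]]]].
have Iopen x : 0 < x < 1 -> Icc 0 1 x.
  by case/andP => x0 x1; rewrite /Icc /= (ltW x0) (ltW x1).
have Icc0 : Icc 0 1 (0 : R) by rewrite /Icc /= lexx ler01.
have Icc1 : Icc 0 1 (1 : R) by rewrite /Icc /= lexx ler01.
have f00 : f0 0 = 0 by apply/f0fix => //; left.
have f01 : f0 1 = 1 by apply/f0fix => //; right.
have f0c : continuous f0.
  by move=> x; apply: differentiable_continuous; apply/derivable1_diffP.
have f0_gt : forall x, 0 < x < 1 -> x < f0 x.
  apply: gt_self_of_no_fixpoint f0c _ _.
    move=> y /[dup] /Iopen y01 /andP[y0 y1]; apply/eqP => /(f0fix y y01).
    by case=> ye; move: y0 y1; rewrite ye ltxx.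
  by apply: exists_gt_self_near0 => //; rewrite df0_0.
split=> // x x01; rewrite f0_gt // -[X in _ < X]f01.
by apply: f0incr => //; [exact: Iopen | case/andP: x01].
Qed.

End IntervalDynamics.

Section Conjugacy.
Variables (R : realType) (n : nat) (f : 'rV[R]_n -> 'rV[R]_n).
Variables (Gamma : set 'rV[R]_n) (pi : 'rV[R]_n -> Sigma2).
Hypothesis conj : conjugacy f Gamma pi.

Lemma conjugacy_fixpoint th : Gamma th -> pi th = zero_seq -> f th = th.
Proof.
case: conj => Ginv [piE [piI _]] Gth pith.
apply: piI => //; first exact: Ginv.
by rewrite piE // pith.
Qed.

Definition delta_seq (j : int) : Sigma2 := fun k => k == j.

Lemma conjugacy_delta_orbit : exists z : int -> 'rV[R]_n,
  forall j, [/\ Gamma (z j), pi (z j) = delta_seq j & f (z j) = z (j - 1)].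
Proof.
case: conj => Ginv [piE [piI [piS _]]].
have /choice[z zP] : forall j, exists z, Gamma z /\ pi z = delta_seq j.
  by move=> j; have [z Gz pz] := piS (delta_seq j); exists z.
exists z => j; have [Gz pz] := zP j; have [Gz' pz'] := zP (j - 1).
split=> //; apply: piI => //; first exact: Ginv.
rewrite piE // pz pz'; apply: funext => k; rewrite /Defs.shift /delta_seq.
by rewrite [RHS]eq_sym subr_eq eq_sym.
Qed.

Lemma conjugacy_cvg th (z : nat -> 'rV[R]_n) :
  Gamma th -> (forall m, Gamma (z m)) ->
  (forall K : nat, \forall m \near \oo,
     forall k : int, `|k| <= K%:Z -> pi (z m) k = pi th k) ->
  z @ \oo --> th.
Proof.
case: conj => _ [_ [_ [_ [_ piVcont]]]] Gth Gz zK.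
apply/cvgrPdist_lt => e e0; have [K HK] := piVcont th e Gth e0.
by near=> m; apply: HK => //; near: m; exact: zK.
Unshelve. all: by end_near. Qed.

End Conjugacy.

Lemma delta_seq_near_zero (sq : nat -> int) :
  (forall m, m%:Z <= `|sq m|) ->
  forall K : nat, \forall m \near \oo,
    forall k : int, `|k| <= K%:Z -> delta_seq (sq m) k = zero_seq k.
Proof.
move=> sqm K; near=> m => k kK; apply/negbTE/eqP => ksq.
have Km : (K < m)%N by near: m; exact: nbhs_infty_gt.
have : m%:Z <= K%:Z by rewrite (le_trans (sqm m)) // -ksq.
by rewrite lez_nat leqNgt Km.
Unshelve. all: by end_near. Qed.

Section SkewProduct.
Variables (R : realType) (n : nat) (Phi : 'rV[R]_n -> 'rV[R]_n).
Variables (C0 C1 : set 'rV[R]_n) (f0 f1 : R -> R).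

Local Notation F := (skewF Phi C0 f0 f1).
Local Notation D := (skew_dom C0 C1).

Lemma skewF_C0 x y : C0 x -> F (x, y) = (Phi x, f0 y).
Proof. by move=> C0x; rewrite /skewF /= asboolT. Qed.

Lemma skewF_notC0 x y : ~ C0 x -> F (x, y) = (Phi x, f1 y).
Proof. by move=> nC0x; rewrite /skewF /= asboolF. Qed.

Lemma skew_jac_C0 x y : C0 x ->
  skew_jac Phi C0 f0 f1 (x, y) = block_mx (jac Phi x) 0 0 (derive1 f0 y)%:M.
Proof. by move=> C0x; rewrite /skew_jac /= asboolT. Qed.

Lemma cvg_pair_seq (a : nat -> 'rV[R]_n) (b : nat -> R) (th : 'rV[R]_n)
    (y : R) :
  a @ \oo --> th -> b @ \oo --> y -> (fun m => (a m, b m)) @ \oo --> (th, y).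
Proof. exact: (@cvg_pair _ _ _ _ (nbhs th) (nbhs y)). Qed.

Lemma skew_fiber_connection th :
  Phi th = th -> C0 th -> continuous f0 -> f0 0 = 0 -> f0 1 = 1 ->
  (forall x, 0 < x < 1 -> x < f0 x < 1) ->
  exists X, Ws F D (th, 1) X /\ Wu F D (th, 0) X.
Proof.
move=> Phith C0th f0c f00 f01 f0up.
have iterF m y : iter m F (th, y) = (th, iter m f0 y).
  by elim: m => //= m ->; rewrite skewF_C0 // Phith.
have half01 : 0 < (1 / 2 : R) < 1.
  by rewrite divr_gt0 //= ltr_pdivrMr // mul1r ltr1n.
have mem01 y : 0 < y < 1 -> Icc 0 1 y.
  by case/andP => y0 y1; rewrite /Icc /= !ltW.
have [v [v0 vP]] : exists v : nat -> R,
    v 0%N = 1 / 2 /\ forall m, 0 < v m < 1 /\ f0 (v m.+1) = v m.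
  apply: (exists_backward_orbit (A := fun y => 0 < y < 1)) half01 => y.
  exact: exists_preimage01.
exists (th, 1 / 2); split; [split|].
- by move=> m; rewrite iterF; split; [left | apply/mem01/iter_mem01].
- under eq_fun do rewrite iterF.
  by apply: cvg_pair_seq; [exact: cvg_cst | exact: iter_cvg1].
have v01 m : 0 < v m < 1 := (vP m).1.
have fv m : f0 (v m.+1) = v m := (vP m).2.
exists (fun m => (th, v m)); split=> [|m|]; first by rewrite v0.
  split; first by split; [left | exact: mem01 (v01 _)].
  by rewrite skewF_C0 // Phith fv.
apply: cvg_pair_seq; first exact: cvg_cst.
by apply: (backward_orbit_cvg0 f0c _ v01 fv) => x /f0up /andP[].
Qed.

Lemma skew_horseshoe_connection (Gamma : set 'rV[R]_n)
    (pi : 'rV[R]_n -> Sigma2) th :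
  conjugacy Phi Gamma pi -> C0 `&` C1 = set0 ->
  (forall x, Gamma x -> pi x 0 = false -> C0 x) ->
  (forall x, Gamma x -> pi x 0 = true -> C1 x) ->
  Gamma th -> pi th = zero_seq -> f0 0 = 0 -> f0 1 = 1 -> f1 1 = 0 ->
  exists X, Wu F D (th, 1) X /\ Ws F D (th, 0) X.
Proof.
move=> conj C01 piC0 piC1 Gth pith f00 f01 f11.
have [z zP] := conjugacy_delta_orbit conj.
have C0z j : j != 0 -> C0 (z j).
  move=> j0; have [Gz pz _] := zP j; apply: piC0 => //.
  by rewrite pz /delta_seq eq_sym (negbTE j0).
have C1z0 : C1 (z 0).
  by have [Gz pz _] := zP 0; apply: piC1 => //; rewrite pz.
have nC0z0 : ~ C0 (z 0).
  by move=> C0z0; have : (C0 `&` C1) (z 0) by []; rewrite C01.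
have Dz j y : Icc 0 1 y -> D (z j, y).
  by move=> y01; split=> //; have [->|/C0z] := eqVneq j 0; [right | left].
have Icc00 : Icc 0 1 (0 : R) by rewrite /Icc /= lexx ler01.
have Icc01 : Icc 0 1 (1 : R) by rewrite /Icc /= lexx ler01.
have zcvg (sq : nat -> int) : (forall m, m%:Z <= `|sq m|) ->
    (fun m => z (sq m)) @ \oo --> th.
  move=> sqm; apply: (conjugacy_cvg conj Gth) => [m|K].
    by have [] := zP (sq m).
  apply: filterS (delta_seq_near_zero sqm K) => m + k kK => /(_ k kK).
  by have [_ -> _] := zP (sq m); rewrite pith.
have iterX m : iter m.+1 F (z 0, 1) = (z (- (m.+1)%:Z), 0).
  elim: m => [|m IH].
    by rewrite /= skewF_notC0 // f11; have [_ _ ->] := zP 0.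
  rewrite iterS IH skewF_C0; last by apply: C0z; rewrite oppr_eq0.
  have [_ _ ->] := zP (- (m.+1)%:Z).
  by rewrite f00 [m.+2%:Z]intS opprD addrC.
exists (z 0, 1); split.
  exists (fun m => (z m%:Z, 1)); split=> [|m|] //.
    split; first exact: Dz.
    rewrite skewF_C0 ?f01; last exact: C0z.
    have [_ _ ->] := zP m.+1.
    by rewrite intS addrAC subrr add0r.
  apply: (cvg_pair_seq (a := fun m => z m%:Z) (b := fun=> 1)).
    by apply: zcvg => m; rewrite ger0_norm.
  exact: cvg_cst.
split=> [[|m]|]; rewrite ?iterX; [exact: Dz | exact: Dz |].
have iter_fst m : (iter m F (z 0, 1)).1 = z (- m%:Z).
  by case: m => [|m]; rewrite ?iterX //= oppr0.
under eq_fun => m do rewrite (surjective_pairing (iter m F _)) iter_fst.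
apply: cvg_pair_seq; first by apply: zcvg => m; rewrite normrN ger0_norm.
by rewrite -cvg_shiftS; under eq_fun do rewrite iterX; exact: cvg_cst.
Qed.

End SkewProduct.

Theorem lemma2p6 (R : realType) (s u : nat)
    (f0 f1 : R -> R) (beta lambda gamma' gamma : R)
    (a0 b0 a1 b1 alpha alphabar : R) (N : nat)
    (Phi : 'rV[R]_(s + u) -> 'rV[R]_(s + u)) (Gamma : set 'rV[R]_(s + u))
    (pi : 'rV[R]_(s + u) -> Sigma2) (C0 C1 : set 'rV[R]_(s + u))
    (ks ku : R) :
  (0 < s)%N -> (0 < u)%N ->
  C1_map f0 -> C1_map f1 -> maps01_inj f0 -> maps01_inj f1 ->
  F0i f0 beta lambda ->
  F0ii f0 lambda a0 b0 a1 b1 alpha N ->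
  F1i f1 gamma' gamma ->
  F1ii f1 a1 alpha alphabar ->
  F01 f0 f1 a0 b0 a1 ->
  horseshoe_setting Phi Gamma pi C0 C1 ks ku ->
  0 < ks -> ks < Num.min lambda gamma' -> beta < ku ->
  let F := skewF Phi C0 f0 f1 in
  let D := skew_dom C0 C1 in
  let P : 'rV[R]_(s + u) * R := (0, 1) in
  let Q : 'rV[R]_(s + u) * R := (0, 0) in
  [/\ F P = P /\ saddle_mx (skew_jac Phi C0 f0 f1 P) u,
      F Q = Q /\ saddle_mx (skew_jac Phi C0 f0 f1 Q) u.+1,
      (exists X, Ws F D P X /\ Wu F D Q X) &
      (exists X, Wu F D P X /\ Ws F D Q X)].
Proof.
move=> s0 u0 C1f0 _ _ _ hF0 _ _ _ [f11 _ _] hsetting ks0 ks_min beta_ku F D P Q.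
have [f0c f00 f01 f0_between] := F0i_dynamics C1f0 hF0.
case: hF0 => _ [_ [df0_0 [beta1 [df0_1 [l0 [l1 _]]]]]].
case: hsetting => _ [_ [conj [hyp [_ [_ [C01 [piC0 [piC1 [Gth [pith _]]]]]]]]]].
have Phi0 : Phi 0 = 0 := conjugacy_fixpoint conj Gth pith.
have C00 : C0 0 by apply: piC0; rewrite ?pith.
have ks1 : 0 < ks < 1.
  by rewrite ks0 (lt_trans _ l1) // (lt_le_trans ks_min) // ge_min lexx.
have hJ : hyperbolic_mx (jac Phi 0) u.
  exact: hyperbolic_set_fixpoint hyp _ ks1 (lt_trans beta1 beta_ku) Gth Phi0.
split.
- split; first by rewrite /F skewF_C0 // Phi0 f01.
  rewrite /P skew_jac_C0 // df0_1; split; last by rewrite u0 addn1 ltnS leq_addl.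
  rewrite -[X in hyperbolic_mx _ X]addn0; apply: hyperbolic_mx_diag_block hJ _.
  by apply: hyperbolic_mx_scalar_contracting; rewrite l0.
- split; first by rewrite /F skewF_C0 // Phi0 f00.
  rewrite /Q skew_jac_C0 // df0_0; split.
    rewrite -[X in hyperbolic_mx _ X]addn1.
    exact: hyperbolic_mx_diag_block hJ (hyperbolic_mx_scalar_expanding _ beta1).
  by rewrite /= addn1 ltnS -{1}[u]add0n ltn_add2r.
- exact: skew_fiber_connection Phi0 C00 f0c f00 f01 f0_between.
- exact: skew_horseshoe_connection conj C01 piC0 piC1 Gth pith f00 f01 f11.
Qed.
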